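(* Let $G'$ be an antipodal partial cube of rank $r$ and let $G$ be a halfspace of $G'$ (so $G$ is an affine partial cube). Then $G$ has rank at most $r-1$.
   Context: Hypercube $Q_n$: vertex set $\{+,-\}^n$, adjacency = differing in one coordinate. A partial cube is an isometric subgraph $G'$ of $Q_n$ with $n$ minimal; its edges split into $\Theta$-classes $E_f$ (edges flipping coordinate $f$), and the halfspaces $E_f^{+},E_f^{-}$ are the subgraphs induced by the vertices whose coordinate $f$ is $+$, resp. $-$. $G'$ is antipodal if for each vertex the vertex with all coordinates flipped also belongs to $G'$. An affine partial cube is a halfspace of an antipodal partial cube. The contraction $\pi_f$ contracts all edges of $E_f$; the rank of a partial cube is the largest $r$ such that $Q_r$ can be obtained from it by a sequence of contractions. *)

From mathcomp Require Import all_boot.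
Set Implicit Arguments. Unset Strict Implicit. Unset Printing Implicit Defensive.

(* Vertices of the hypercube Q_n: sign vectors {+,-}^n, encoded with
   true = + and false = -. *)
Definition cube (n : nat) := {ffun 'I_n -> bool}.

Definition hamming n (x y : cube n) : nat := #|[set i | x i != y i]|.
Definition adj n (x y : cube n) : bool := hamming x y == 1.

Definition isometric n (V : {set cube n}) : Prop :=
  forall x y, x \in V -> y \in V ->
    exists p : seq (cube n),
      [/\ path (@adj n) x p, last x p = y, all (mem V) p & size p = hamming x y].

(* Partial cube: isometric subgraph of Q_n with n minimal, i.e. every
   coordinate takes both values on V (every Theta-class is nonempty). *)
Definition partial_cube n (V : {set cube n}) : Prop :=
  isometric V /\ forall f : 'I_n, exists x y, [/\ x \in V, y \in V, x f & ~~ y f].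

Definition antipode n (x : cube n) : cube n := [ffun i => ~~ x i].

Definition antipodal n (V : {set cube n}) : Prop :=
  forall x, x \in V -> antipode x \in V.

(* Halfspace E_f^b: vertices whose coordinate f equals b (b = true is E_f^+). *)
Definition halfspace n (V : {set cube n}) (f : 'I_n) (b : bool) : {set cube n} :=
  [set x in V | x f == b].

(* Contraction pi_f: contract all edges flipping coordinate f.  We realize it
   by forgetting coordinate f (setting it to a constant), which gives a graph
   isomorphic to the one obtained by deleting coordinate f. *)
Definition forget n (f : 'I_n) (x : cube n) : cube n :=
  [ffun i => if i == f then false else x i].
Definition contract n (f : 'I_n) (V : {set cube n}) : {set cube n} :=
  [set forget f x | x in V].

Definition contract_seq n (fs : seq 'I_n) (V : {set cube n}) : {set cube n} :=
  foldr (@contract n) V fs.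

Definition iso_to_cube n (W : {set cube n}) (r : nat) : Prop :=
  exists h : cube r -> cube n,
    [/\ injective h, W = [set h x | x in [set: cube r]]
      & forall x y, adj (h x) (h y) = adj x y].

Definition has_rank n (V : {set cube n}) (r : nat) : Prop :=
  (exists fs, iso_to_cube (contract_seq fs V) r) /\
  (forall fs m, iso_to_cube (contract_seq fs V) m -> m <= r).

From mathcomp Require Import all_boot.
Set Implicit Arguments. Unset Strict Implicit. Unset Printing Implicit Defensive.

(* Contracting W down to Q_m amounts to W shattering a set J of m coordinates, i.e. realising
   every sign pattern on J.  An adjacency-preserving injection of Q_m is a translate of a
   coordinate embedding (h_coord), and the coordinates it uses survive the contraction, so W
   realises every pattern on them; conversely, contracting every coordinate outside a shattered
   J leaves the full subcube on J.  If the halfspace E_f^b shatters J, then f is not in J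
   (E_f^b is constant at f) and V shatters f |: J, since a pattern with sign ~~ b at f is the
   antipode of a pattern realised in E_f^b. *)

Definition flip n (i : 'I_n) (x : cube n) : cube n := [ffun k => (k == i) (+) x k].

Definition zero n : cube n := [ffun _ => false].

Lemma flipE n (i k : 'I_n) x : flip i x k = (k == i) (+) x k.
Proof. by rewrite ffunE. Qed.

Lemma flipK n (i : 'I_n) : involutive (flip i).
Proof. by move=> x; apply/ffunP=> k; rewrite !flipE addbA addbb. Qed.

Lemma flipC n (i j : 'I_n) x : flip i (flip j x) = flip j (flip i x).
Proof. by apply/ffunP=> k; rewrite !flipE !addbA [(_ == i) (+) _]addbC. Qed.

Lemma adjP n (x y : cube n) : reflect (exists i, y = flip i x) (adj x y).
Proof.
apply: (iffP cards1P) => [[i /setP xy_i] | [i ->]].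
  exists i; apply/ffunP=> k; move: (xy_i k); rewrite !inE flipE => <-.
  by case: (x k); case: (y k).
by exists i; apply/setP=> k; rewrite !inE flipE; case: (x k); case: (k == i).
Qed.

Lemma adj_flip n (i : 'I_n) x : adj x (flip i x).
Proof. by apply/adjP; exists i. Qed.

(* Two distinct neighbours of [a] have exactly one common neighbour besides [a]. *)
Lemma flip_square n (p q s t : 'I_n) (a : cube n) :
  p != q -> flip s (flip p a) = flip t (flip q a) -> flip s (flip p a) != a ->
  flip s (flip p a) = flip p (flip q a).
Proof.
move=> neq_pq c_eq c_neq_a.
have neq_tq : t != q by apply: contraNneq c_neq_a => eq_tq; rewrite c_eq eq_tq flipK.
have /(congr1 (fun c : cube n => c q)) := c_eq.
rewrite !flipE eqxx (eq_sym q t) (negbTE neq_tq) (eq_sym q p) (negbTE neq_pq).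
by case: eqP => [-> _ | _]; [rewrite flipC | case: (a q)].
Qed.

Lemma cube_ind n (P : cube n -> Prop) :
  P (zero n) -> (forall (x : cube n) k, x k = false -> P x -> P (flip k x)) ->
  forall x, P x.
Proof.
move=> P0 Pflip x; move ones_x : #|[set i | x i]| => s.
elim: s x ones_x => [|s IHs] x ones_x.
  suff -> : x = zero n by [].
  apply/ffunP=> k; rewrite ffunE; apply/negbTE/negP => xk.
  by have := card0_eq ones_x k; rewrite inE xk.
have /card_gt0P [k] : 0 < #|[set i | x i]| by rewrite ones_x.
rewrite inE => xk; rewrite -(flipK k x); apply: Pflip; first by rewrite flipE eqxx xk.
apply: IHs; have -> : [set i | flip k x i] = [set i | x i] :\ k.
  by apply/setP=> i; rewrite !inE flipE; case: eqP => [->|]; rewrite ?xk.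
by move: ones_x; rewrite (cardsD1 k) inE xk add1n => -[].
Qed.

Section CubeEmbedding.

Variables (m n : nat) (h : cube m -> cube n).
Hypotheses (h_inj : injective h) (h_adj : forall x y, adj (h x) (h y) = adj x y).

Lemma adj_h_flip_zero j : exists i, h (flip j (zero m)) == flip i (h (zero m)).
Proof.
have /adjP [i ->] : adj (h (zero m)) (h (flip j (zero m))) by rewrite h_adj adj_flip.
by exists i.
Qed.

Definition coord j : 'I_n := xchoose (adj_h_flip_zero j).

Lemma h_flip_zero j : h (flip j (zero m)) = flip (coord j) (h (zero m)).
Proof. exact/eqP/(xchooseP (adj_h_flip_zero j)). Qed.

Lemma coord_inj : injective coord.
Proof.
move=> j k eq_jk; have := h_flip_zero j; rewrite eq_jk -h_flip_zero.
by move=> /h_inj /ffunP /(_ j); rewrite !flipE eqxx ffunE eq_sym; case: eqP.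
Qed.

Lemma h_flip (x : cube m) j : x j = false -> h (flip j x) = flip (coord j) (h x).
Proof.
elim/cube_ind: x j => [|x k xk IHx] j; first by rewrite h_flip_zero.
rewrite flipE; case: (eqVneq j k) => [-> | neq_jk]; first by rewrite xk.
rewrite addFb => xj; rewrite IHx // [flip j _]flipC.
have fxk : flip j x k = false by rewrite flipE eq_sym (negbTE neq_jk).
have /adjP [s c_eq_s] : adj (h (flip j x)) (h (flip k (flip j x))).
  by rewrite h_adj adj_flip.
have /adjP [t c_eq_t] : adj (h (flip k x)) (h (flip k (flip j x))).
  by rewrite flipC h_adj adj_flip.
rewrite IHx // in c_eq_t; rewrite IHx // in c_eq_s.
rewrite c_eq_s (flip_square (q := coord k) (t := t)) -?c_eq_s -?c_eq_t //.
  by apply: contra neq_jk => /eqP /coord_inj ->.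
apply/eqP => /h_inj /ffunP /(_ j).
by rewrite !flipE eqxx (negbTE neq_jk) xj.
Qed.

Lemma h_coord (x : cube m) j : h x (coord j) = h (zero m) (coord j) (+) x j.
Proof.
elim/cube_ind: x j => [j | x k xk IHx j]; first by rewrite ffunE addbF.
rewrite h_flip // !flipE IHx (inj_eq coord_inj).
by case: (j == k); case: (h _ _); case: (x j).
Qed.

End CubeEmbedding.

Definition keep n (J : {set 'I_n}) (x : cube n) : cube n := [ffun i => (i \in J) && x i].

Lemma keep_eq_in n (J : {set 'I_n}) (x y : cube n) :
  {in J, x =1 y} -> keep J x = keep J y.
Proof.
by move=> xy; apply/ffunP=> i; rewrite !ffunE; case: (boolP (i \in J)) => // /xy ->.
Qed.

Lemma contract_seqE n (fs : seq 'I_n) V :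
  contract_seq fs V = keep [set i | i \notin fs] @: V.
Proof.
elim: fs => [|a fs IHfs] /=.
  by rewrite -[LHS]imset_id; apply: eq_imset => x; apply/ffunP=> i; rewrite !ffunE inE.
rewrite IHfs /contract -imset_comp; apply: eq_imset => x /=.
by apply/ffunP=> i; rewrite !ffunE !inE; case: eqP.
Qed.

Lemma contract_seq_enumC n (J : {set 'I_n}) V :
  contract_seq (enum (~: J)) V = keep J @: V.
Proof.
rewrite contract_seqE; congr imset; congr keep.
by apply/setP=> i; rewrite !inE mem_enum inE negbK.
Qed.

Definition shatters n (W : {set cube n}) (J : {set 'I_n}) : Prop :=
  forall y : cube n, exists2 z, z \in W & {in J, z =1 y}.

Lemma shatters_keep n (W : {set cube n}) J :
  shatters W J -> keep J @: W = keep J @: [set: cube n].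
Proof.
move=> WJ; apply/setP=> y; apply/imsetP/imsetP => [[z _ ->] | [x _ ->]]; first by exists z.
by have [z Wz /keep_eq_in zx] := WJ x; exists z.
Qed.

Lemma iso_to_cube_keep n (J : {set 'I_n}) :
  iso_to_cube (keep J @: [set: cube n]) #|J|.
Proof.
pose emb (x : cube #|J|) : cube n := [ffun i => [exists j, (enum_val j == i) && x j]].
have embE x j : emb x (enum_val j) = x j.
  rewrite ffunE; apply/existsP/idP => [[k /andP [/eqP /enum_val_inj -> //]] | xj].
  by exists j; rewrite eqxx.
have emb_out x i : i \notin J -> emb x i = false.
  move=> iJ; rewrite ffunE; apply/existsP => -[j /andP [/eqP ji _]].
  by move: iJ; rewrite -ji enum_valP.
have in_enum i : i \in J -> exists j, i = enum_val (A := J) j.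
  by move=> iJ; exists (enum_rank_in iJ i); rewrite (enum_rankK_in iJ iJ).
exists emb; split.
- by move=> x y exy; apply/ffunP=> j; rewrite -!embE exy.
- apply/setP=> y; apply/imsetP/imsetP => [[x _ ->] | [x _ ->]].
    exists [ffun j => x (enum_val j)] => //; apply/ffunP=> i; rewrite ffunE.
    case: (boolP (i \in J)) => [/in_enum [j ->] | iJ]; last by rewrite emb_out.
    by rewrite embE ffunE.
  exists (emb x) => //; apply/ffunP=> i; rewrite [keep _ _ _]ffunE.
  by case: (boolP (i \in J)) => // iJ; rewrite emb_out.
- move=> x y; rewrite /adj /hamming.
  suff -> : [set i | emb x i != emb y i] = enum_val @: [set j | x j != y j].
    by rewrite card_imset //; apply: enum_val_inj.
  apply/setP=> i; rewrite inE; case: (boolP (i \in J)) => [/in_enum [j ->] | iJ].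
    by rewrite !embE (mem_imset _ _ enum_val_inj) inE.
  rewrite !emb_out //; apply/esym/imsetP => -[j _ ij].
  by move: iJ; rewrite ij enum_valP.
Qed.

Lemma shatters_contract_iso n (W : {set cube n}) J :
  shatters W J -> exists fs, iso_to_cube (contract_seq fs W) #|J|.
Proof.
move=> WJ; exists (enum (~: J)).
by rewrite contract_seq_enumC shatters_keep //; apply: iso_to_cube_keep.
Qed.

Lemma contract_iso_shatters n (W : {set cube n}) fs m :
  iso_to_cube (contract_seq fs W) m -> exists2 J : {set 'I_n}, #|J| = m & shatters W J.
Proof.
rewrite contract_seqE; case=> h [h_inj imh h_adj].
pose phi := coord h_adj; pose h0 := h (zero m).
have h_in x : exists2 z, z \in W & h x = keep [set i | i \notin fs] z.
  by apply/imsetP; rewrite imh imset_f.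
have phi_fs j : phi j \notin fs.
  have [z _ hz] := h_in [ffun _ => ~~ h0 (phi j)].
  move: (congr1 (fun c : cube n => c (phi j)) hz).
  by rewrite /= (h_coord h_inj) !ffunE inE; case: (h0 _); case: (_ \in fs).
exists (phi @: [set: 'I_m]).
  by rewrite card_imset ?cardsT ?card_ord //; apply: coord_inj.
move=> y; have [z Wz hz] := h_in [ffun j => y (phi j) (+) h0 (phi j)].
exists z => // _ /imsetP [j _ ->]; move: (congr1 (fun c : cube n => c (phi j)) hz).
by rewrite /= (h_coord h_inj) !ffunE inE phi_fs /= => <-; case: (h0 _); case: (y _).
Qed.

Lemma halfspace_shatters_notin n (V : {set cube n}) f b J :
  shatters (halfspace V f b) J -> f \notin J.
Proof.
move=> HJ; apply/negP => fJ; have [z] := HJ [ffun _ => ~~ b].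
by rewrite inE => /andP [_ /eqP zf] /(_ f fJ); rewrite zf ffunE; case: (b).
Qed.

Lemma antipodal_shatters_setU1 n (V : {set cube n}) f b J :
  antipodal V -> shatters (halfspace V f b) J -> shatters V (f |: J).
Proof.
move=> V_anti HJ y; case: (eqVneq (y f) b) => [yf | yf].
  have [z] := HJ y; rewrite inE => /andP [Vz /eqP zf] zy.
  by exists z => // i /setU1P [-> | /zy //]; rewrite zf yf.
have [z] := HJ (antipode y); rewrite inE => /andP [Vz /eqP zf] zy.
exists (antipode z); first exact: V_anti.
move=> i /setU1P [-> | /zy zyi]; rewrite ffunE; last by rewrite zyi ffunE negbK.
by rewrite zf; move: yf; case: (b); case: (y f).
Qed.

Theorem mainTheorem17 (n : nat) (V : {set cube n}) (r : nat) :
  partial_cube V -> antipodal V -> has_rank V r ->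
  forall (f : 'I_n) (b : bool) (r' : nat),
    has_rank (halfspace V f b) r' -> r'.+1 <= r.
Proof.
move=> _ V_anti [_ rank_max] f b r' [[fs H_iso] _].
have [J <- HJ] := contract_iso_shatters H_iso.
have [gs V_iso] := shatters_contract_iso (antipodal_shatters_setU1 V_anti HJ).
by move: V_iso; rewrite cardsU1 (halfspace_shatters_notin HJ); apply: rank_max.
Qed.
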